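(* Let $\mathbb{V}$ and $\mathbb{V}'$ be varieties with signatures $\mathcal{F}\subseteq\mathcal{F}'$ and defining sets of identities $\Sigma\subseteq\Sigma'$ respectively, and suppose $\mathbb{V}$ is BIT speciale with terms $0,\alpha_1,\dots,\alpha_n,\theta$ (so $\mathbb{V}'$ is BIT speciale with the same terms, and every $\mathbb{V}'$-algebra is a $\mathbb{V}$-algebra by forgetting the operations in $\mathcal{F}'\setminus\mathcal{F}$). Let $A'$ be a $\mathbb{V}'$-algebra and $H\subseteq A'$. The following are equivalent: (i) $H$ is an ideal of $A'$ in the variety $\mathbb{V}'$; (ii) $H$ is an ideal of $A'$ in the variety $\mathbb{V}$, and for every $\tau\in\mathcal{F}'\setminus\mathcal{F}$ of arity $k$, all $a_1,\dots,a_k\in A'$, all $1\le i\le n$ and all $h_{rs}\in H$ ($1\le r\le k$, $1\le s\le n$), one has $\alpha_i\big(\tau(\theta(h_{11},\dots,h_{1n},a_1),\dots,\theta(h_{k1},\dots,h_{kn},a_k)),\tau(a_1,\dots,a_k)\big)\in H$; (iii) $H$ is an ideal of $A'$ in the variety $\mathbb{V}$, and for every $\tau\in\mathcal{F}'\setminus\mathcal{F}$ of arity $k$, all $a_1,\dots,a_k\in A'$, all $1\le i\le n$, $1\le j\le k$ and all $h_1,\dots,h_n\in H$, one has $\alpha_i\big(\tau(a_1,\dots,a_{j-1},\theta(h_1,\dots,h_n,a_j),a_{j+1},\dots,a_k),\tau(a_1,\dots,a_k)\big)\in H$.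
   Context: BIT speciale: the algebraic theory contains a constant $0$ and, for some $n\ge1$, binary terms $\alpha_1,\dots,\alpha_n$ and an $(n+1)$-ary term $\theta$ such that $\alpha_i(x,x)=0$ and $\theta(\alpha_1(x,y),\dots,\alpha_n(x,y),y)=x$ are identities. For a variety $\mathbb{W}$ with signature $\mathcal{G}$ containing $0$ in its theory: an ideal term of $\mathbb{W}$ in the variables $y_1,\dots,y_p$ is a term $t(x_1,\dots,x_m,y_1,\dots,y_p)$ over $\mathcal{G}$ such that $t(x_1,\dots,x_m,0,\dots,0)=0$ is an identity of $\mathbb{W}$; a non-empty subset $H$ of a $\mathbb{W}$-algebra $A$ is an ideal of $A$ in $\mathbb{W}$ if $t(a_1,\dots,a_m,b_1,\dots,b_p)\in H$ for every ideal term $t$ of $\mathbb{W}$, all $a_r\in A$ and all $b_s\in H$. *)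

From mathcomp Require Import all_boot.
Set Implicit Arguments.
Unset Strict Implicit.
Unset Printing Implicit Defensive.

Record signature := Signature { op : Type; arity : op -> nat }.

Inductive term (S : signature) : Type :=
| Var : nat -> term S
| App : forall o : op S, ('I_(arity o) -> term S) -> term S.
Arguments Var {S} _.
Arguments App {S} o _.

Record algebra (S : signature) := Algebra {
  carrier :> Type;
  interp : forall o : op S, ('I_(arity o) -> carrier) -> carrier }.

Fixpoint eval (S : signature) (A : algebra S) (e : nat -> A) (t : term S) : A :=
  match t with
  | Var k => e k
  | App o f => @interp S A o (fun i => eval e (f i))
  end.
Arguments eval {S} A e t.

Fixpoint subst (S : signature) (s : nat -> term S) (t : term S) : term S :=
  match t with
  | Var k => s k
  | App o f => App o (fun i => subst s (f i))
  end.

(* all variables of t are < m (t is an m-ary term) *)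
Fixpoint vars_lt (S : signature) (m : nat) (t : term S) : Prop :=
  match t with
  | Var k => k < m
  | App o f => forall i, vars_lt m (f i)
  end.

Definition identities (S : signature) := term S -> term S -> Prop.

Definition models (S : signature) (Sigma : identities S) (A : algebra S) : Prop :=
  forall t u, Sigma t u -> forall e : nat -> A, eval A e t = eval A e u.

Definition identity_of (S : signature) (Sigma : identities S) (t u : term S) : Prop :=
  forall A : algebra S, models Sigma A -> forall e : nat -> A, eval A e t = eval A e u.

(* BIT speciale with terms zero (a constant: no variables), alpha_0..alpha_{n-1}
   (binary, variables 0,1) and theta ((n+1)-ary, variables 0..n). *)
Definition BIT_speciale (S : signature) (Sigma : identities S) (n : nat)
  (zero : term S) (alpha : nat -> term S) (theta : term S) : Prop :=
  1 <= n /\ [/\ vars_lt 0 zero,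
      (forall i, i < n -> vars_lt 2 (alpha i)),
      vars_lt n.+1 theta,
      (forall i, i < n -> identity_of Sigma (subst (fun _ => Var 0) (alpha i)) zero) &
      identity_of Sigma
        (subst (fun k => if k < n then alpha k else Var 1) theta) (Var 0)].

Definition ideal_term (S : signature) (Sigma : identities S) (zero : term S)
  (Y : seq nat) (t : term S) : Prop :=
  identity_of Sigma (subst (fun k => if k \in Y then zero else Var k) t) zero.

Definition ideal (S : signature) (Sigma : identities S) (zero : term S)
  (A : algebra S) (H : A -> Prop) : Prop :=
  (exists x, H x) /\
  forall (Y : seq nat) (t : term S), ideal_term Sigma zero Y t ->
  forall e : nat -> A, (forall k, k \in Y -> H (e k)) -> H (eval A e t).

Arguments ideal {S} Sigma zero A H.

Definition subsig (S' : signature) (inF : op S' -> bool) : signature :=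
  Signature (fun o : {o : op S' | inF o} => arity (proj1_sig o)).

Fixpoint emb (S' : signature) (inF : op S' -> bool) (t : term (subsig inF)) : term S' :=
  match t with
  | Var k => Var k
  | App o f => App (proj1_sig o) (fun i => emb (f i))
  end.

Definition reduct (S' : signature) (inF : op S' -> bool) (A : algebra S') :
  algebra (subsig inF) :=
  @Algebra (subsig inF) A (fun o f => @interp S' A (proj1_sig o) f).

Definition env2 (A : Type) (x y : A) : nat -> A := fun k => if k == 0 then x else y.
Definition envth (A : Type) (n : nat) (h : nat -> A) (a : A) : nat -> A :=
  fun k => if k < n then h k else a.

From mathcomp Require Import all_boot.
From Stdlib Require Import FunctionalExtensionality.

(* Write x ≡ y when alpha_i(x, y) lies in H for every i.  For an ideal H of a
   BIT speciale variety, ≡ is reflexive and transitive, theta(h, a) ≡ a whenever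
   all h_s lie in H, and x ≡ y with y in H forces x = theta(alpha(x, y), y) into H.
   Every term operation of the variety preserves ≡, because
   alpha_i(t(.., theta(y_1, .., y_n, x_v), ..), t(.., x_v, ..)) is an ideal term
   in the y's.  So H is an ideal of the expansion A' exactly when it is an ideal
   of the reduct and the new operations preserve ≡; conditions (ii) and (iii)
   are two ways of saying the latter, since x = theta(alpha(x, y), y) and
   arguments may be changed one at a time. *)

Set Implicit Arguments.
Unset Strict Implicit.
Unset Printing Implicit Defensive.

Definition subst2 {T : signature} (t1 t2 : term T) : nat -> term T :=
  fun k => if k == 0 then t1 else t2.

Definition theta_args {T : signature} (n m : nat) : nat -> term T :=
  fun k => if k < n then Var k else Var m.

Section TermEval.
Variables (T : signature) (B : algebra T).

Lemma eq_eval (e e' : nat -> B) t : e =1 e' -> eval B e t = eval B e' t.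
Proof.
move=> ee'; elim: t => [k|o f IH] /=; first exact: ee'.
by congr (interp _); apply: functional_extensionality => i.
Qed.

Lemma eval_subst (e : nat -> B) s t :
  eval B e (subst s t) = eval B (fun k => eval B e (s k)) t.
Proof.
elim: t => [k|o f IH] //=.
by congr (interp _); apply: functional_extensionality => i.
Qed.

Lemma eval_vars_lt m t (e e' : nat -> B) :
  vars_lt m t -> (forall k, k < m -> e k = e' k) -> eval B e t = eval B e' t.
Proof.
move=> + ee'; elim: t => [k|o f IH] /=; first exact: ee'.
by move=> ft; congr (interp _); apply: functional_extensionality => i; apply: IH.
Qed.

Lemma eval_subst2 (e : nat -> B) t1 t2 u :
  eval B e (subst (subst2 t1 t2) u) = eval B (env2 (eval B e t1) (eval B e t2)) u.
Proof. by rewrite eval_subst; apply: eq_eval => k; rewrite /subst2 /env2; case: ifP. Qed.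

Lemma eval_subst_theta_args (e : nat -> B) n m u :
  eval B e (subst (theta_args n m) u) = eval B (envth n e (e m)) u.
Proof. by rewrite eval_subst; apply: eq_eval => k; rewrite /theta_args /envth; case: ifP. Qed.

End TermEval.

Lemma mem_iota0 m n : (m \in iota 0 n) = (m < n).
Proof. by rewrite mem_iota leq0n add0n. Qed.

Lemma rel_app_of_rel_update (X Y : Type) k (Ri : X -> X -> Prop) (Ro : Y -> Y -> Prop)
    (f : ('I_k -> X) -> Y) :
  (forall y, Ro y y) -> (forall x y w, Ro x y -> Ro y w -> Ro x w) ->
  (forall a j x, Ri x (a j) -> Ro (f (fun r => if r == j then x else a r)) (f a)) ->
  forall a b, (forall r, Ri (a r) (b r)) -> Ro (f a) (f b).
Proof.
move=> Ro_refl Ro_trans Ro_update a b ab.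
pose mix m r := if val r < m then a r else b r.
have mix_Ro m : m <= k -> Ro (f (mix m)) (f b).
  elim: m => [_|m IH lt_mk].
    by rewrite (_ : mix 0 = b) //; apply: functional_extensionality.
  pose j := Ordinal lt_mk.
  have -> : mix m.+1 = fun r => if r == j then a j else mix m r.
    apply: functional_extensionality => r; rewrite /mix ltnS leq_eqVlt.
    case: (eqVneq r j) => [->|ne_rj]; first by rewrite eqxx.
    by rewrite -[m]/(val j) (inj_eq val_inj) (negbTE ne_rj).
  by apply: Ro_trans (IH (ltnW lt_mk)); apply: Ro_update; rewrite /mix ltnn.
rewrite (_ : a = mix k); first exact: mix_Ro.
by apply: functional_extensionality => r; rewrite /mix ltn_ord.
Qed.

Section Reduct.
Variables (S' : signature) (inF : op S' -> bool).

Lemma eval_emb (B : algebra S') (e : nat -> B) t :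
  eval B e (emb t) = eval (reduct inF B) e t.
Proof.
elim: t => [k|o f IH] //=.
by congr (interp _); apply: functional_extensionality => i.
Qed.

Lemma emb_subst s (t : term (subsig inF)) :
  emb (subst s t) = subst (fun k => emb (s k)) (emb t).
Proof.
elim: t => [k|o f IH] //=.
by congr (App _ _); apply: functional_extensionality => i.
Qed.

Variables (Sigma : identities (subsig inF)) (Sigma' : identities S').
Hypothesis Sigma_sub : forall t u, Sigma t u -> Sigma' (emb t) (emb u).

Lemma models_reduct (B : algebra S') : models Sigma' B -> models Sigma (reduct inF B).
Proof. by move=> modB t u tu e; rewrite -!eval_emb; apply: modB (Sigma_sub tu) e. Qed.

Lemma identity_of_emb t u : identity_of Sigma t u -> identity_of Sigma' (emb t) (emb u).
Proof. by move=> tu B modB e; rewrite !eval_emb; apply: tu (models_reduct modB) e. Qed.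

Lemma ideal_term_emb z Y t : ideal_term Sigma z Y t -> ideal_term Sigma' (emb z) Y (emb t).
Proof.
move=> /identity_of_emb; rewrite /ideal_term emb_subst.
congr (identity_of _ (subst _ _) _); apply: functional_extensionality => k.
by case: ifP.
Qed.

Lemma ideal_reduct z (B : algebra S') (H : B -> Prop) :
  ideal Sigma' (emb z) B H -> ideal Sigma z (reduct inF B) H.
Proof.
case=> nzH idH; split=> // Y t /ideal_term_emb tY e eY.
by rewrite -eval_emb; apply: idH tY e eY.
Qed.

End Reduct.

Record bit_laws (T : signature) (Sg : identities T) (n : nat) (z : term T)
    (al : nat -> term T) (th : term T) : Prop := BitLaws {
  zero_const : forall B, models Sg B -> forall e e' : nat -> B, eval B e z = eval B e' z;
  alpha_diag : forall B, models Sg B -> forall i, i < n ->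
    forall (u : B) (e : nat -> B), eval B (env2 u u) (al i) = eval B e z;
  theta_alpha : forall B, models Sg B -> forall x y : B,
    eval B (envth n (fun k => eval B (env2 x y) (al k)) y) th = x }.

Lemma bit_laws_of_BIT_speciale T (Sg : identities T) n z al th :
  BIT_speciale Sg n z al th -> bit_laws Sg n z al th.
Proof.
case=> _ [z0 _ _ al_diag th_al]; split=> B modB.
- by move=> e e'; apply: eval_vars_lt z0 _.
- move=> i lt_in u e; have := al_diag i lt_in B modB (fun _ => u).
  rewrite eval_subst /= (eval_vars_lt z0 (e' := e)) // => <-.
  by apply: eq_eval => k; rewrite /env2; case: ifP.
- move=> x y; rewrite -[RHS](th_al B modB (env2 x y)) eval_subst.
  by apply: eq_eval => k; rewrite /envth; case: ifP.
Qed.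

Lemma bit_laws_emb (S' : signature) (inF : op S' -> bool)
    (Sigma : identities (subsig inF)) (Sigma' : identities S') n z al th :
  (forall t u, Sigma t u -> Sigma' (emb t) (emb u)) ->
  bit_laws Sigma n z al th ->
  bit_laws Sigma' n (emb z) (fun i => emb (al i)) (emb th).
Proof.
move=> Sigma_sub bitS; split=> B /(models_reduct Sigma_sub) modB.
- by move=> e e'; rewrite !eval_emb; apply: (zero_const bitS modB).
- by move=> i lt_in u e; rewrite !eval_emb; apply: (alpha_diag bitS modB).
- move=> x y; rewrite eval_emb -[RHS](theta_alpha bitS modB x y).
  by apply: (@eq_eval _ (reduct inF B)) => k; rewrite /envth; case: ifP => // _; rewrite eval_emb.
Qed.

Lemma envth_envth (A : Type) n (h : nat -> A) a b : envth n (envth n h a) b = envth n h b.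
Proof. by apply: functional_extensionality => k; rewrite /envth; case: ltnP. Qed.

Lemma envth_at (A : Type) n (h : nat -> A) a : envth n h a n = a.
Proof. by rewrite /envth ltnn. Qed.

Section IdealEquiv.
Variables (T : signature) (Sg : identities T) (n : nat) (z : term T)
  (al : nat -> term T) (th : term T).
Hypothesis bitS : bit_laws Sg n z al th.

Lemma theta_zero (B : algebra T) (e : nat -> B) y :
  models Sg B -> eval B (envth n (fun _ => eval B e z) y) th = y.
Proof.
move=> modB; rewrite -[RHS](theta_alpha bitS modB y y).
apply: eq_eval => k; rewrite /envth; case: ifP => // lt_kn.
by rewrite (alpha_diag bitS modB lt_kn y e).
Qed.

Variables (C : algebra T) (H : C -> Prop).
Hypotheses (modC : models Sg C) (idH : ideal Sg z C H).

Lemma ideal_mem_eval m t (e : nat -> C) :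
  (forall B, models Sg B -> forall g : nat -> B,
     eval B (fun k => if k < m then eval B g z else g k) t = eval B g z) ->
  (forall k, k < m -> H (e k)) -> H (eval C e t).
Proof.
move=> tY eY; apply: (idH.2 (iota 0 m)) => [B modB g|k]; last by rewrite mem_iota0; apply: eY.
by rewrite eval_subst -(tY B modB g); apply: eq_eval => k; rewrite mem_iota0; case: ifP.
Qed.

Lemma ideal_mem_zero (e : nat -> C) : H (eval C e z).
Proof. by apply: (ideal_mem_eval (m := 0)) => // B _ g; apply: eq_eval. Qed.

Lemma ideal_mem_theta h y :
  (forall s, s < n -> H (h s)) -> H y -> H (eval C (envth n h y) th).
Proof.
move=> hH yH; rewrite -(envth_at n h y) -(envth_envth n h y) -eval_subst_theta_args.
apply: (ideal_mem_eval (m := n.+1)) => [B modB g|k _]; last first.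
  by rewrite /envth; case: ifP => [/hH|].
rewrite eval_subst_theta_args -[RHS](theta_zero g (eval B g z) modB).
by apply: eq_eval => k; rewrite /envth /= ltnSn; case: ifP => // lt_kn; rewrite ltnS ltnW.
Qed.

Definition ideal_equiv (x y : C) := forall i, i < n -> H (eval C (env2 x y) (al i)).

Local Notation "x ≡ y" := (ideal_equiv x y) (at level 70).

Lemma ideal_equiv_refl x : x ≡ x.
Proof.
move=> i lt_in; rewrite (alpha_diag bitS modC lt_in x (fun _ => x)).
exact: ideal_mem_zero.
Qed.

Lemma ideal_equiv_zero x (e : nat -> C) : H x -> x ≡ eval C e z.
Proof.
move=> xH i lt_in; rewrite -(zero_const bitS modC (fun _ => x)).
rewrite (_ : eval C _ (al i) = eval C (fun _ => x) (subst (subst2 (Var 0) z) (al i))).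
  apply: (ideal_mem_eval (m := 1)) => // B modB g.
  rewrite eval_subst2 -[RHS](alpha_diag bitS modB lt_in (eval B g z) g).
  by apply: eq_eval => k; rewrite /env2; case: ifP => // _; apply: (zero_const bitS modB).
by rewrite eval_subst2.
Qed.

Lemma ideal_equiv_theta h a : (forall s, s < n -> H (h s)) -> eval C (envth n h a) th ≡ a.
Proof.
move=> hH i lt_in.
have -> : eval C (env2 (eval C (envth n h a) th) a) (al i) =
          eval C (envth n h a) (subst (subst2 (subst (theta_args n n) th) (Var n)) (al i)).
  by rewrite eval_subst2 eval_subst_theta_args /= envth_envth envth_at.
apply: (ideal_mem_eval (m := n)) => [B modB g|k lt_kn]; last by rewrite /envth lt_kn; apply: hH.
rewrite eval_subst2 eval_subst_theta_args /= ltnn.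
have -> : eval B (envth n (fun k => if k < n then eval B g z else g k) (g n)) th = g n.
  rewrite -[RHS](theta_zero g (g n) modB); apply: eq_eval => k.
  by rewrite /envth /=; case: ltnP.
exact: (alpha_diag bitS modB lt_in (g n) g).
Qed.

(* The ideal term: variables 0..n-1 hold the y's, the variables of t are shifted by n. *)
Lemma ideal_equiv_eval_update t v (e e' : nat -> C) :
  (forall k, k != v -> e k = e' k) -> e v ≡ e' v -> eval C e t ≡ eval C e' t.
Proof.
move=> eq_e ev i lt_in.
pose shift k : term T := Var (k + n).
pose sv k := if k == v then subst (theta_args n (v + n)) th else shift k.
pose E m := if m < n then eval C (env2 (e v) (e' v)) (al m) else e' (m - n).
have E_shift k : E (k + n) = e' k by rewrite /E ltnNge leq_addl addnK.
have -> : eval C (env2 (eval C e t) (eval C e' t)) (al i) =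
          eval C E (subst (subst2 (subst sv t) (subst shift t)) (al i)).
  rewrite eval_subst2 !eval_subst; congr (eval _ (env2 _ _) _); apply: eq_eval => k /=.
    rewrite /sv; case: eqVneq => [->|ne_kv]; last by rewrite /= E_shift eq_e.
    rewrite eval_subst_theta_args -[LHS](theta_alpha bitS modC (e v) (e' v)).
    by apply: eq_eval => m; rewrite /envth E_shift /E /=; case: ltnP.
  by rewrite E_shift.
apply: (ideal_mem_eval (m := n)) => [B modB g|k lt_kn]; last by rewrite /E lt_kn; apply: ev.
rewrite eval_subst2 !eval_subst.
set g' := fun k => if k < n then _ else _.
have -> : eval B (fun k => eval B g' (sv k)) t = eval B (fun k => eval B g' (shift k)) t.
  apply: eq_eval => k; rewrite /sv; case: eqVneq => // ->.
  rewrite eval_subst_theta_args -[RHS](theta_zero g (g' (v + n)) modB).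
  by apply: eq_eval => m; rewrite /envth /g' /=; case: ltnP.
exact: (alpha_diag bitS modB lt_in _ g).
Qed.

Lemma ideal_mem_equiv x y : x ≡ y -> H y -> H x.
Proof. by move=> xy yH; rewrite -(theta_alpha bitS modC x y); apply: ideal_mem_theta. Qed.

Lemma ideal_equiv_trans x y w : x ≡ y -> y ≡ w -> x ≡ w.
Proof.
move=> xy yw i lt_in; apply: (@ideal_mem_equiv _ (eval C (env2 y w) (al i))); last exact: yw.
apply: (@ideal_equiv_eval_update _ 0); last exact: xy.
by move=> k; rewrite /env2 => /negbTE ->.
Qed.

Lemma ideal_equiv_interp1 o (a : 'I_(arity o) -> C) j x :
  x ≡ a j -> interp (fun r => if r == j then x else a r) ≡ interp a.
Proof.
move=> xa; pose e' m := a (insubd j m); pose e m := if m == val j then x else e' m.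
have -> : (fun r => if r == j then x else a r) = fun r => e (val r).
  by apply: functional_extensionality => r; rewrite /e /e' valKd.
rewrite [X in _ ≡ interp X](_ : a = fun r => e' (val r)); last first.
  by apply: functional_extensionality => r; rewrite /e' valKd.
apply: (@ideal_equiv_eval_update (App o (fun r => Var (val r))) (val j)).
  by move=> k; rewrite /e => /negbTE ->.
by rewrite /e eqxx /e' valKd.
Qed.

Lemma ideal_equiv_interp o (a b : 'I_(arity o) -> C) :
  (forall r, a r ≡ b r) -> interp a ≡ interp b.
Proof.
apply: (rel_app_of_rel_update (f := @interp T C o)).
- exact: ideal_equiv_refl.
- exact: ideal_equiv_trans.
- by move=> c j x; apply: ideal_equiv_interp1.
Qed.

End IdealEquiv.

Section ExpansionIdeals.
Variables (S' : signature) (inF : op S' -> bool).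
Variables (Sigma : identities (subsig inF)) (Sigma' : identities S').
Hypothesis Sigma_sub : forall t u, Sigma t u -> Sigma' (emb t) (emb u).
Variables (n : nat) (zero : term (subsig inF)) (alpha : nat -> term (subsig inF))
  (theta : term (subsig inF)).
Hypothesis bitS : bit_laws Sigma n zero alpha theta.
Variable A' : algebra S'.
Hypothesis modA' : models Sigma' A'.
Variable H : A' -> Prop.

Local Notation A := (reduct inF A').
Local Notation "x ≡ y" := (@ideal_equiv _ n alpha A H x y) (at level 70).

Let modA : models Sigma A := models_reduct Sigma_sub modA'.

Definition equiv_compatible (tau : op S') :=
  forall a b : 'I_(arity tau) -> A', (forall r, a r ≡ b r) -> interp a ≡ interp b.

Lemma ideal_equiv_emb x y : ideal_equiv n (fun i => emb (alpha i)) H x y <-> x ≡ y.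
Proof. by split=> xy i lt_in; move: (xy i lt_in); rewrite eval_emb. Qed.

Section ReductIdeal.
Hypothesis idH : ideal Sigma zero A H.

Lemma ideal_equiv_eval_expansion t (e e' : nat -> A') :
  (forall tau, ~~ inF tau -> equiv_compatible tau) ->
  (forall k, e k ≡ e' k) -> eval A' e t ≡ eval A' e' t.
Proof.
move=> compat; elim: t e e' => [k|o f IH] e e' ee' /=; first exact: ee'.
case Fo: (inF o); last by apply: compat => [|r]; [rewrite Fo | apply: IH].
exact: (ideal_equiv_interp bitS modA idH (o := exist _ o Fo) (fun r => IH r e e' ee')).
Qed.

Lemma ideal_expansion_of_compatible :
  (forall tau, ~~ inF tau -> equiv_compatible tau) -> ideal Sigma' (emb zero) A' H.
Proof.
move=> compat; split=> [|Y t tY e eY]; first exact: idH.1.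
pose e0 k := eval A' e (if k \in Y then emb zero else Var k).
have e0_zero : eval A' e0 t = eval A e zero by rewrite -eval_subst (tY A' modA' e) eval_emb.
apply: (ideal_mem_equiv bitS modA idH (y := eval A' e0 t)).
  apply: ideal_equiv_eval_expansion => // k; rewrite /e0; case: ifP => [/eY eH | _].
    by rewrite eval_emb; apply: (ideal_equiv_zero bitS modA idH e eH).
  exact: (ideal_equiv_refl bitS modA idH).
by rewrite e0_zero; apply: (ideal_mem_zero idH).
Qed.

Lemma compatible_iff_theta tau :
  equiv_compatible tau <->
  forall (a : 'I_(arity tau) -> A') (h : 'I_(arity tau) -> nat -> A'),
    (forall r s, s < n -> H (h r s)) ->
    interp (fun r => eval A (envth n (h r) (a r)) theta) ≡ interp a.
Proof.
split=> [compat a h hH | theta_compat a b ab].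
  by apply: compat => r; apply: (ideal_equiv_theta bitS idH) => s; apply: hH.
have -> : a = fun r => eval A (envth n (fun s => eval A (env2 (a r) (b r)) (alpha s)) (b r)) theta.
  by apply: functional_extensionality => r; rewrite (theta_alpha bitS modA).
by apply: theta_compat => r s; apply: ab.
Qed.

Lemma compatible_iff_theta1 tau :
  equiv_compatible tau <->
  forall (a : 'I_(arity tau) -> A') j h, (forall s, s < n -> H (h s)) ->
    interp (fun r => if r == j then eval A (envth n h (a j)) theta else a r) ≡ interp a.
Proof.
split=> [compat a j h hH | theta_compat].
  apply: compat => r; case: eqVneq => [->|_]; last exact: (ideal_equiv_refl bitS modA idH).
  exact: (ideal_equiv_theta bitS idH).
apply: (rel_app_of_rel_update (f := @interp S' A' tau)).
- exact: (ideal_equiv_refl bitS modA idH).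
- exact: (ideal_equiv_trans bitS modA idH).
- by move=> a j x xa; rewrite -(theta_alpha bitS modA x (a j)); apply: theta_compat.
Qed.

End ReductIdeal.

Lemma ideal_expansion_iff :
  ideal Sigma' (emb zero) A' H <->
  ideal Sigma zero A H /\ forall tau, ~~ inF tau -> equiv_compatible tau.
Proof.
split=> [idH' | [idH compat]]; last exact: ideal_expansion_of_compatible.
split=> [|tau _ a b ab]; first exact: (ideal_reduct Sigma_sub idH').
apply/ideal_equiv_emb; apply: (ideal_equiv_interp (bit_laws_emb Sigma_sub bitS) modA' idH').
by move=> r; apply/ideal_equiv_emb.
Qed.

End ExpansionIdeals.

Theorem corollary2p7
  (S' : signature) (inF : op S' -> bool)
  (Sigma : identities (subsig inF)) (Sigma' : identities S')
  (HSS : forall t u, Sigma t u -> Sigma' (emb t) (emb u))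
  (n : nat) (zero : term (subsig inF)) (alpha : nat -> term (subsig inF))
  (theta : term (subsig inF))
  (Hbit : BIT_speciale Sigma n zero alpha theta)
  (A' : algebra S') (HA' : models Sigma' A') (H : A' -> Prop) :
  let A := reduct inF A' in
  let al i x y := eval A (env2 x y) (alpha i) in
  let th h a := eval A (envth n h a) theta in
  let cond_i := ideal Sigma' (emb zero) A' H in
  let cond_ii :=
    ideal Sigma zero A H /\
    forall (tau : op S'), ~~ inF tau ->
    forall (a : 'I_(arity tau) -> A') (i : nat), i < n ->
    forall h : 'I_(arity tau) -> nat -> A',
      (forall r s, s < n -> H (h r s)) ->
      H (al i (@interp S' A' tau (fun r => th (h r) (a r))) (@interp S' A' tau a)) in
  let cond_iii :=
    ideal Sigma zero A H /\
    forall (tau : op S'), ~~ inF tau ->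
    forall (a : 'I_(arity tau) -> A') (i : nat), i < n ->
    forall (j : 'I_(arity tau)) (h : nat -> A'),
      (forall s, s < n -> H (h s)) ->
      H (al i (@interp S' A' tau (fun r => if r == j then th h (a j) else a r))
              (@interp S' A' tau a)) in
  (cond_i <-> cond_ii) /\ (cond_i <-> cond_iii).
Proof.
move=> A al th cond_i cond_ii cond_iii.
have bitS := bit_laws_of_BIT_speciale Hbit.
have ideal_iff := ideal_expansion_iff HSS bitS HA' H.
split; apply: iff_trans ideal_iff _; split=> -[idH compat]; split=> // tau Ftau.
- move/(compatible_iff_theta HSS bitS HA' idH): (compat tau Ftau) => theta_compat.
  by move=> a i lt_in h hH; apply: theta_compat.
- apply/(compatible_iff_theta HSS bitS HA' idH) => a h hH i lt_in.
  exact: compat.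
- move/(compatible_iff_theta1 HSS bitS HA' idH): (compat tau Ftau) => theta_compat.
  by move=> a i lt_in j h hH; apply: theta_compat.
- apply/(compatible_iff_theta1 HSS bitS HA' idH) => a j h hH i lt_in.
  exact: compat.
Qed.
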